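(* Let $a_0,a_1,a_2,a_3\in\mathbb{R}$ and consider the monic binary quartic form $$f(x,y)=x^4+a_3x^3y+a_2x^2y^2+a_1xy^3+a_0y^4 .$$ Let $$b_0=\tfrac14\,(-a_1^2+a_1a_2a_3-a_0a_3^2),\quad b_1=\tfrac14\,(4a_0-a_2^2-a_1a_3),\quad b_2=\tfrac{a_2}{2},\quad \lambda_0=\frac{4b_2+2\sqrt{3b_1+4b_2^2}}{3}.$$ Then $f$ is positive semi-definite if and only if $\lambda_0$ is real and $$\lambda_0\ge \frac{a_3^2}{4},\qquad -\tfrac14\lambda_0^3+b_2\lambda_0^2+b_1\lambda_0+b_0\ge 0 .$$ Moreover, $f$ is positive definite if and only if $\lambda_0$ is real and $$\lambda_0> \frac{a_3^2}{4},\qquad -\tfrac14\lambda_0^3+b_2\lambda_0^2+b_1\lambda_0+b_0> 0 .$$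
   Context: A binary form $f(x,y)$ with real coefficients is positive definite (resp. positive semi-definite) if $f(x,y)>0$ (resp. $f(x,y)\ge 0$) for all real $x,y$ not both zero. The quantity $\lambda_0$ is real exactly when $3b_1+4b_2^2\ge 0$. *)

From Stdlib Require Import Reals.
Open Scope R_scope.

Definition quartic (a0 a1 a2 a3 x y : R) : R :=
  x^4 + a3 * x^3 * y + a2 * x^2 * y^2 + a1 * x * y^3 + a0 * y^4.

Definition psd_form (f : R -> R -> R) : Prop :=
  forall x y : R, ~ (x = 0 /\ y = 0) -> 0 <= f x y.

Definition pd_form (f : R -> R -> R) : Prop :=
  forall x y : R, ~ (x = 0 /\ y = 0) -> 0 < f x y.

Definition b0 (a0 a1 a2 a3 : R) : R := / 4 * (- a1^2 + a1 * a2 * a3 - a0 * a3^2).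
Definition b1 (a0 a1 a2 a3 : R) : R := / 4 * (4 * a0 - a2^2 - a1 * a3).
Definition b2 (a2 : R) : R := a2 / 2.

(* discriminant-like quantity under the square root; lambda0 is real iff it is >= 0 *)
Definition lam_rad (a0 a1 a2 a3 : R) : R := 3 * b1 a0 a1 a2 a3 + 4 * (b2 a2)^2.

(* lambda0, meaningful when lam_rad >= 0 (sqrt is the real square root) *)
Definition lambda0 (a0 a1 a2 a3 : R) : R :=
  (4 * b2 a2 + 2 * sqrt (lam_rad a0 a1 a2 a3)) / 3.

Definition cubic_val (a0 a1 a2 a3 l : R) : R :=
  - / 4 * l^3 + b2 a2 * l^2 + b1 a0 a1 a2 a3 * l + b0 a0 a1 a2 a3.

From Stdlib Require Import Reals Lra.
From Coquelicot Require Import Coquelicot.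
Open Scope R_scope.

(* For every l, f = (x^2 + a3/2 xy + (a2-l)/2 y^2)^2 + y^2 Q_l(x,y), where the
   binary quadratic form Q_l has leading coefficient l - a3^2/4 and
   discriminant -4 cubic_val l.  So the inequalities at lambda0 make Q_lambda0
   positive (semi-)definite, and with it f.
   Conversely, let x0 minimise f(x,1) and m = f(x0,1).  Then
   f(x,1) = m + (x-x0)^2 ((x+p)^2 + W) for some p and W >= 0.  In these
   parameters, with T = (x0+p)^2 + W and r = sqrt(3 b1 + 4 b2^2), we have
   r^2 = T^2/4 + 3m,  lambda0 - a3^2/4 = W + (2r - T)/3  and
   4 cubic_val lambda0 = 4 W m + ((2r - T)/3)^2 (4r + T)/3.
   These are nonnegative when m >= 0, and positive when m > 0. *)

Lemma quadratic_form_psd A B C :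
  0 <= A -> 0 <= C -> B^2 <= 4*A*C -> psd_form (fun x y => A*x^2 + B*x*y + C*y^2).
Proof.
  intros HA HC Hdisc x y _.
  assert (HxA : 4*A*(A*x^2 + B*x*y + C*y^2) = (2*A*x + B*y)^2 + (4*A*C - B^2)*y^2) by ring.
  assert (HxC : 4*C*(A*x^2 + B*x*y + C*y^2) = (2*C*y + B*x)^2 + (4*A*C - B^2)*x^2) by ring.
  pose proof (pow2_ge_0 x). pose proof (pow2_ge_0 y).
  pose proof (pow2_ge_0 (2*A*x + B*y)). pose proof (pow2_ge_0 (2*C*y + B*x)).
  destruct (Rle_lt_or_eq_dec 0 A HA) as [HA'|<-].
  - apply (Rmult_le_reg_l (4*A)); nra.
  - destruct (Rle_lt_or_eq_dec 0 C HC) as [HC'|<-].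
    + apply (Rmult_le_reg_l (4*C)); nra.
    + assert (B = 0) by nra. subst. lra.
Qed.

Lemma quadratic_form_pd A B C :
  0 < A -> B^2 < 4*A*C -> pd_form (fun x y => A*x^2 + B*x*y + C*y^2).
Proof.
  intros HA Hdisc x y Hxy.
  assert (HxA : 4*A*(A*x^2 + B*x*y + C*y^2) = (2*A*x + B*y)^2 + (4*A*C - B^2)*y^2) by ring.
  destruct (Req_dec y 0) as [->|Hy].
  - assert (x <> 0) by tauto. assert (0 < x^2) by (apply pow2_gt_0; auto). nra.
  - assert (0 < y^2) by (apply pow2_gt_0; auto).
    pose proof (pow2_ge_0 (2*A*x + B*y)).
    apply (Rmult_lt_reg_l (4*A)); nra.
Qed.

Lemma neg_abs_mul_le a y : - (Rabs a * Rabs y) <= a * y.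
Proof. rewrite <- Rabs_mult, <- (Rabs_Ropp (a*y)). pose proof (Rle_abs (-(a*y))). lra. Qed.

Lemma quartic_ge_const_far a0 a1 a2 a3 x :
  1 + Rabs a3 + Rabs a2 + Rabs a1 <= Rabs x -> a0 <= quartic a0 a1 a2 a3 x 1.
Proof.
  intro Hx. unfold quartic.
  pose proof (neg_abs_mul_le a3 x). pose proof (neg_abs_mul_le a1 x).
  pose proof (Rabs_maj2 a2). pose proof (pow2_abs x).
  pose proof (Rabs_pos a3). pose proof (Rabs_pos a2). pose proof (Rabs_pos a1).
  set (t := Rabs x) in *.
  assert (Hsq : t^2 - Rabs a3 * t - Rabs a2 >= Rabs a1).
  { assert (t * (t - Rabs a3) >= 1 * (1 + Rabs a2 + Rabs a1))
      by (apply Rle_ge, Rmult_le_compat; lra).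
    lra. }
  assert (Hin : x^2 + a3*x + a2 >= Rabs a1) by lra.
  assert (t <= x^2) by nra.
  assert (t * Rabs a1 <= x^2 * (x^2 + a3*x + a2)) by (apply Rmult_le_compat; lra).
  replace (x^4 + a3*x^3*1 + a2*x^2*1^2 + a1*x*1^3 + a0*1^4)
    with (x^2 * (x^2 + a3*x + a2) + a1*x + a0) by ring.
  lra.
Qed.

Section Resolvent.

Variables a0 a1 a2 a3 : R.

Definition rem_lead (l : R) : R := l - a3^2/4.
Definition rem_mid (l : R) : R := a1 - a3*(a2 - l)/2.
Definition rem_tail (l : R) : R := a0 - (a2 - l)^2/4.

Lemma quartic_eq_square_add_rem l x y :
  quartic a0 a1 a2 a3 x y =
  (x^2 + a3/2*x*y + (a2 - l)/2*y^2)^2 +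
  y^2 * (rem_lead l * x^2 + rem_mid l * x * y + rem_tail l * y^2).
Proof. unfold quartic, rem_lead, rem_mid, rem_tail; field. Qed.

Lemma cubic_val_eq_rem_disc l :
  4 * cubic_val a0 a1 a2 a3 l = 4 * rem_lead l * rem_tail l - rem_mid l ^ 2.
Proof. unfold cubic_val, b0, b1, b2, rem_lead, rem_mid, rem_tail; field. Qed.

Lemma lambda0_critical : 0 <= lam_rad a0 a1 a2 a3 ->
  3 * lambda0 a0 a1 a2 a3 ^ 2 = 8 * b2 a2 * lambda0 a0 a1 a2 a3 + 4 * b1 a0 a1 a2 a3.
Proof.
  intro Hrad. pose proof (sqrt_sqrt _ Hrad) as Hsq.
  unfold lambda0. set (r := sqrt (lam_rad a0 a1 a2 a3)) in *.
  unfold lam_rad in Hsq. nra.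
Qed.

Lemma rem_tail_lambda0_degenerate : 0 <= lam_rad a0 a1 a2 a3 ->
  rem_lead (lambda0 a0 a1 a2 a3) = 0 -> rem_mid (lambda0 a0 a1 a2 a3) = 0 ->
  rem_tail (lambda0 a0 a1 a2 a3) = 0.
Proof.
  intros Hrad.
  pose proof (lambda0_critical Hrad).
  set (l := lambda0 a0 a1 a2 a3) in *.
  (* The l-derivative of [cubic_val_eq_rem_disc]; lambda0 is a critical point of cubic_val. *)
  assert (4 * rem_tail l + 2 * rem_lead l * (a2 - l) - rem_mid l * a3
          = 8 * b2 a2 * l + 4 * b1 a0 a1 a2 a3 - 3 * l^2)
    by (unfold rem_lead, rem_mid, rem_tail, b1, b2; field).
  intros Hlead Hmid. rewrite Hlead, Hmid in *. lra.
Qed.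

Lemma psd_of_cubic_criteria : 0 <= lam_rad a0 a1 a2 a3 ->
  a3^2/4 <= lambda0 a0 a1 a2 a3 -> 0 <= cubic_val a0 a1 a2 a3 (lambda0 a0 a1 a2 a3) ->
  psd_form (quartic a0 a1 a2 a3).
Proof.
  intros Hrad Hlam Hcub x y Hxy.
  pose proof (cubic_val_eq_rem_disc (lambda0 a0 a1 a2 a3)) as Hdisc.
  pose proof (rem_tail_lambda0_degenerate Hrad) as Hdeg.
  rewrite (quartic_eq_square_add_rem (lambda0 a0 a1 a2 a3)).
  set (l := lambda0 a0 a1 a2 a3) in *.
  assert (HA : 0 <= rem_lead l) by (unfold rem_lead; lra).
  assert (HC : 0 <= rem_tail l).
  { destruct (Rle_lt_or_eq_dec _ _ HA) as [HA'|HA0].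
    - pose proof (pow2_ge_0 (rem_mid l)).
      destruct (Rle_or_lt 0 (rem_tail l)) as [|Hneg]; [assumption|].
      pose proof (Rmult_pos_neg _ _ HA' Hneg). lra.
    - assert (Hmid : rem_mid l = 0) by nra. rewrite (Hdeg (eq_sym HA0) Hmid). lra. }
  pose proof (quadratic_form_psd _ (rem_mid l) _ HA HC ltac:(lra) x y Hxy).
  pose proof (pow2_ge_0 y).
  pose proof (pow2_ge_0 (x^2 + a3/2*x*y + (a2 - l)/2*y^2)).
  cbv beta in *. nra.
Qed.

Lemma pd_of_cubic_criteria : 0 <= lam_rad a0 a1 a2 a3 ->
  a3^2/4 < lambda0 a0 a1 a2 a3 -> 0 < cubic_val a0 a1 a2 a3 (lambda0 a0 a1 a2 a3) ->
  pd_form (quartic a0 a1 a2 a3).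
Proof.
  intros Hrad Hlam Hcub x y Hxy.
  pose proof (cubic_val_eq_rem_disc (lambda0 a0 a1 a2 a3)) as Hdisc.
  rewrite (quartic_eq_square_add_rem (lambda0 a0 a1 a2 a3)).
  set (l := lambda0 a0 a1 a2 a3) in *.
  assert (HA : 0 < rem_lead l) by (unfold rem_lead; lra).
  pose proof (pow2_ge_0 (x^2 + a3/2*x*y + (a2 - l)/2*y^2)).
  destruct (Req_dec y 0) as [->|Hy].
  - assert (Hx : x <> 0) by tauto. pose proof (pow2_gt_0 x Hx).
    replace (x^2 + a3/2*x*0 + (a2 - l)/2*0^2) with (x^2) by ring. nra.
  - pose proof (quadratic_form_pd _ (rem_mid l) (rem_tail l) HA ltac:(lra) x y Hxy).
    pose proof (pow2_gt_0 y Hy).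
    cbv beta in *. nra.
Qed.

End Resolvent.

Lemma quartic_has_min a0 a1 a2 a3 :
  exists x0, forall x, quartic a0 a1 a2 a3 x0 1 <= quartic a0 a1 a2 a3 x 1.
Proof.
  set (M := 1 + Rabs a3 + Rabs a2 + Rabs a1).
  assert (HM : 0 <= M)
    by (unfold M; pose proof (Rabs_pos a3); pose proof (Rabs_pos a2); pose proof (Rabs_pos a1); lra).
  assert (Hcont : forall c, continuity_pt (fun x => quartic a0 a1 a2 a3 x 1) c)
    by (intro c; unfold quartic; reg).
  destruct (continuity_ab_min (fun x => quartic a0 a1 a2 a3 x 1) (-M) M ltac:(lra)
              (fun c _ => Hcont c)) as [x0 [Hmin _]].
  exists x0. intro x.
  destruct (Rle_or_lt (Rabs x) M) as [Hx|Hx].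
  - apply Hmin. pose proof (Rabs_maj2 x). pose proof (Rle_abs x). lra.
  - assert (quartic a0 a1 a2 a3 0 1 = a0) by (unfold quartic; ring).
    pose proof (Hmin 0 ltac:(lra)).
    pose proof (quartic_ge_const_far a0 a1 a2 a3 x ltac:(unfold M in Hx; lra)).
    lra.
Qed.

Lemma quartic_derivative_at_min a0 a1 a2 a3 x0 :
  (forall x, quartic a0 a1 a2 a3 x0 1 <= quartic a0 a1 a2 a3 x 1) ->
  4*x0^3 + 3*a3*x0^2 + 2*a2*x0 + a1 = 0.
Proof.
  intro Hmin.
  set (f := fun x => quartic a0 a1 a2 a3 x 1).
  assert (Hder : is_derive f x0 (4*x0^3 + 3*a3*x0^2 + 2*a2*x0 + a1))
    by (unfold f, quartic; auto_derive; [auto | ring]).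
  apply is_derive_Reals in Hder.
  exact (deriv_minimum f (x0 - 1) (x0 + 1) x0 (exist _ _ Hder) ltac:(lra) ltac:(lra)
           (fun x _ _ => Hmin x)).
Qed.

Lemma nonneg_of_factored_nonneg x0 p W :
  (forall x, 0 <= (x - x0)^2 * ((x + p)^2 + W)) -> 0 <= W.
Proof.
  intro Hnonneg.
  destruct (Rle_or_lt 0 W) as [|HW]; [assumption | exfalso].
  set (s := sqrt (- W) / 2).
  assert (Hs : 0 < s) by (apply Rdiv_lt_0_compat; [apply sqrt_lt_R0|]; lra).
  assert (Hs2 : s^2 = - W / 4)
    by (unfold s; replace ((sqrt (- W) / 2)^2) with (sqrt (- W) ^ 2 / 4) by field;
        rewrite pow2_sqrt by lra; field).
  assert (Hneg : forall x, x <> x0 -> (x + p)^2 = s^2 -> False).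
  { intros x Hx Hxp. pose proof (Hnonneg x) as Hx0.
    assert (0 < (x - x0)^2) by (apply pow2_gt_0; lra).
    rewrite Hxp in Hx0. nra. }
  destruct (Req_dec x0 (s - p)) as [->|Hx0].
  - apply (Hneg (- s - p)); [lra | ring].
  - apply (Hneg (s - p)); [auto | ring].
Qed.

Lemma quartic_shifted_factorization x0 p W m x :
  quartic (x0^2*p^2 + x0^2*W + m) (2*x0^2*p - 2*x0*p^2 - 2*x0*W)
          (x0^2 - 4*x0*p + p^2 + W) (2*p - 2*x0) x 1
  = m + (x - x0)^2 * ((x + p)^2 + W).
Proof. unfold quartic; ring. Qed.

Lemma quartic_min_factorization a0 a1 a2 a3 : exists x0 p W,
  0 <= W /\ a3 = 2*p - 2*x0 /\ a2 = x0^2 - 4*x0*p + p^2 + W /\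
  a1 = 2*x0^2*p - 2*x0*p^2 - 2*x0*W /\
  a0 = x0^2*p^2 + x0^2*W + quartic a0 a1 a2 a3 x0 1.
Proof.
  destruct (quartic_has_min a0 a1 a2 a3) as [x0 Hmin].
  pose proof (quartic_derivative_at_min a0 a1 a2 a3 x0 Hmin) as Hcrit.
  set (m := quartic a0 a1 a2 a3 x0 1) in *.
  assert (Hm : m = quartic a0 a1 a2 a3 x0 1) by reflexivity. clearbody m.
  set (p := (a3 + 2*x0)/2). set (W := a2 - x0^2 + 4*x0*p - p^2).
  assert (e3 : a3 = 2*p - 2*x0) by (unfold p; field).
  assert (e2 : a2 = x0^2 - 4*x0*p + p^2 + W) by (unfold W; ring).
  assert (e1 : a1 = 2*x0^2*p - 2*x0*p^2 - 2*x0*W)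
    by (replace a1 with (-(4*x0^3 + 3*a3*x0^2 + 2*a2*x0)) by lra; unfold W, p; field).
  assert (e0 : a0 = x0^2*p^2 + x0^2*W + m)
    by (rewrite Hm; unfold quartic; rewrite e1, e2, e3; ring).
  exists x0, p, W. rewrite <- Hm. repeat split; try assumption.
  clearbody p W. subst a0 a1 a2 a3.
  apply (nonneg_of_factored_nonneg x0 p W). intro x.
  pose proof (Hmin x) as Hx. rewrite !quartic_shifted_factorization in Hx. lra.
Qed.

Section Factored.

Variables a0 a1 a2 a3 x0 p W m : R.
Hypothesis HW : 0 <= W.
Hypothesis Hm_nonneg : 0 <= m.
Hypothesis e3 : a3 = 2*p - 2*x0.
Hypothesis e2 : a2 = x0^2 - 4*x0*p + p^2 + W.
Hypothesis e1 : a1 = 2*x0^2*p - 2*x0*p^2 - 2*x0*W.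
Hypothesis e0 : a0 = x0^2*p^2 + x0^2*W + m.

Let T := (x0 + p)^2 + W.
Let r := sqrt (lam_rad a0 a1 a2 a3).

Lemma lam_rad_factored : lam_rad a0 a1 a2 a3 = T^2/4 + 3*m.
Proof. unfold lam_rad, b1, b2, T; subst; field. Qed.

Lemma lambda0_factored : lambda0 a0 a1 a2 a3 = a3^2/4 + W + (2*r - T)/3.
Proof. unfold lambda0, b2. fold r. rewrite e2, e3. unfold T. field. Qed.

Lemma r_sqr : r * r = T^2/4 + 3*m.
Proof.
  unfold r. rewrite lam_rad_factored, sqrt_sqrt; [reflexivity|].
  pose proof (pow2_ge_0 T). lra.
Qed.

Lemma cubic_val_lambda0_factored :
  4 * cubic_val a0 a1 a2 a3 (lambda0 a0 a1 a2 a3) = 4*W*m + ((2*r - T)/3)^2 * ((4*r + T)/3).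
Proof.
  pose proof r_sqr as Hr.
  rewrite lambda0_factored. clearbody r.
  replace m with ((r*r - T^2/4)/3) in * by lra.
  unfold cubic_val, b0, b1, b2. subst. unfold T. field.
Qed.

Lemma T_nonneg : 0 <= T.
Proof. unfold T. pose proof (pow2_ge_0 (x0 + p)). lra. Qed.

Lemma half_T_le_r : T/2 <= r.
Proof.
  pose proof r_sqr. pose proof T_nonneg.
  assert (Hr : 0 <= r) by apply sqrt_pos.
  nra.
Qed.

Lemma half_T_lt_r : 0 < m -> T/2 < r.
Proof.
  intro Hm_pos. pose proof r_sqr. pose proof half_T_le_r. pose proof T_nonneg.
  nra.
Qed.

Lemma cubic_criteria_of_factored :
  0 <= lam_rad a0 a1 a2 a3 /\ a3^2/4 <= lambda0 a0 a1 a2 a3 /\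
  0 <= cubic_val a0 a1 a2 a3 (lambda0 a0 a1 a2 a3).
Proof.
  pose proof half_T_le_r. pose proof cubic_val_lambda0_factored. pose proof T_nonneg.
  split; [rewrite lam_rad_factored; pose proof (pow2_ge_0 T); lra|].
  split; [rewrite lambda0_factored; lra|].
  assert (0 <= W * m) by (apply Rmult_le_pos; assumption).
  assert (0 <= ((2*r - T)/3)^2 * ((4*r + T)/3))
    by (apply Rmult_le_pos; [apply pow2_ge_0 | lra]).
  lra.
Qed.

Lemma strict_cubic_criteria_of_factored : 0 < m ->
  a3^2/4 < lambda0 a0 a1 a2 a3 /\ 0 < cubic_val a0 a1 a2 a3 (lambda0 a0 a1 a2 a3).
Proof.
  intro Hm_pos. pose proof (half_T_lt_r Hm_pos). pose proof cubic_val_lambda0_factored.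
  pose proof T_nonneg.
  split; [rewrite lambda0_factored; lra|].
  assert (0 <= W * m) by (apply Rmult_le_pos; assumption).
  assert (0 < ((2*r - T)/3)^2 * ((4*r + T)/3))
    by (apply Rmult_lt_0_compat; [apply pow2_gt_0 | ]; lra).
  lra.
Qed.

End Factored.

Theorem theorem2 (a0 a1 a2 a3 : R) :
  (psd_form (quartic a0 a1 a2 a3) <->
     (0 <= lam_rad a0 a1 a2 a3 /\
      a3^2 / 4 <= lambda0 a0 a1 a2 a3 /\
      0 <= cubic_val a0 a1 a2 a3 (lambda0 a0 a1 a2 a3))) /\
  (pd_form (quartic a0 a1 a2 a3) <->
     (0 <= lam_rad a0 a1 a2 a3 /\
      a3^2 / 4 < lambda0 a0 a1 a2 a3 /\
      0 < cubic_val a0 a1 a2 a3 (lambda0 a0 a1 a2 a3))).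
Proof.
  destruct (quartic_min_factorization a0 a1 a2 a3) as (x0 & p & W & HW & e3 & e2 & e1 & e0).
  set (m := quartic a0 a1 a2 a3 x0 1) in e0.
  assert (Hnz : ~ (x0 = 0 /\ 1 = 0)) by lra.
  split; split.
  - intro Hpsd.
    exact (cubic_criteria_of_factored a0 a1 a2 a3 x0 p W m HW (Hpsd _ _ Hnz) e3 e2 e1 e0).
  - intros (Hrad & Hlam & Hcub). exact (psd_of_cubic_criteria a0 a1 a2 a3 Hrad Hlam Hcub).
  - intro Hpd. pose proof (Hpd _ _ Hnz) as Hm. pose proof (Rlt_le _ _ Hm) as Hm'.
    destruct (cubic_criteria_of_factored a0 a1 a2 a3 x0 p W m HW Hm' e3 e2 e1 e0)
      as (Hrad & _).
    destruct (strict_cubic_criteria_of_factored a0 a1 a2 a3 x0 p W m HW Hm' e3 e2 e1 e0 Hm)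
      as (Hlam & Hcub).
    auto.
  - intros (Hrad & Hlam & Hcub). exact (pd_of_cubic_criteria a0 a1 a2 a3 Hrad Hlam Hcub).
Qed.
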